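(* Let $0<q<\infty$. Then $\frac{\pi_{2q/(2+q),q/2}}{2^{2/q+1}}=\frac{\pi_{2q/(2+q),q}}{2}$, and for all $x\in\left[0,\frac{\pi_{2q/(2+q),q}}{2}\right)$, $$\sin_{2q/(2+q),q/2}(2^{2/q}x)=\frac{2^{2/q}\sin_{2q/(2+q),q}x}{(1+\sin_{2q/(2+q),q}^{q/2}x)^{2/q}},\qquad \cos_{2q/(2+q),q/2}(2^{2/q}x)=\left(\frac{1-\sin_{2q/(2+q),q}^{q/2}x}{1+\sin_{2q/(2+q),q}^{q/2}x}\right)^{1/q+1/2}.$$ Moreover, for the same $x$, $$\sinh_{2q/(2+q),q/2}(2^{2/q}x)=2^{2/q}\sinh_{2,q}x\,(\cosh_{2,q}x+\sinh_{2,q}^{q/2}x)^{2/q},\qquad \cosh_{2q/(2+q),q/2}(2^{2/q}x)=(\cosh_{2,q}x+\sinh_{2,q}^{q/2}x)^{2/q+1}.$$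
   Context: For $0<q<\infty$ and $\frac{q}{q+1}<p<\infty$: let $F_{p,q}(y)=\int_0^y (1-t^q)^{-1/p}\,dt$ for $y\in[0,1)$ and $\pi_{p,q}=2\int_0^1(1-t^q)^{-1/p}\,dt\in(0,\infty]$ (it equals $\infty$ when $p\le 1$). The function $\sin_{p,q}:[0,\pi_{p,q}/2)\to[0,1)$ is the inverse of $F_{p,q}$ and $\cos_{p,q}x=\frac{d}{dx}\sin_{p,q}x$. Let $G_{p,q}(y)=\int_0^y(1+t^q)^{-1/p}\,dt$ for $y\in[0,\infty)$; its range is $[0,\pi_{r,q}/2)$ with $r=\frac{pq}{pq+p-q}$. The function $\sinh_{p,q}:[0,\pi_{r,q}/2)\to[0,\infty)$ is the inverse of $G_{p,q}$ and $\cosh_{p,q}x=\frac{d}{dx}\sinh_{p,q}x$. (The parameter pairs $(2q/(2+q),q/2)$, $(2q/(2+q),q)$ and $(2,q)$ all satisfy $\frac{q'}{q'+1}<p'<\infty$ for the respective second parameter $q'$.) *)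

From Stdlib Require Import Reals Lra ClassicalEpsilon.
From Coquelicot Require Import Coquelicot.
Open Scope R_scope.

(* Real power x^a for x >= 0 (with 0^a = 0, used only for a > 0).
   Stdlib's Rpower 0 a = 1, hence the guard. *)
Definition pw (x a : R) : R := if Rlt_dec 0 x then Rpower x a else 0.

Definition F_pq (p q y : R) : R :=
  RInt (fun t => pw (1 - pw t q) (- / p)) 0 y.

(* pi_{p,q} = 2 int_0^1 (1 - t^q)^(-1/p) dt in (0, +oo]: the improper
   integral of a positive integrand = sup of F_{p,q} over [0,1). *)
Definition pi_pq (p q : R) : Rbar :=
  Rbar_mult 2 (Lub_Rbar (fun z => exists y, 0 <= y < 1 /\ z = F_pq p q y)).

Definition sin_pq (p q x : R) : R :=
  epsilon (inhabits 0) (fun y => 0 <= y < 1 /\ F_pq p q y = x).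

Definition G_pq (p q y : R) : R :=
  RInt (fun t => pw (1 + pw t q) (- / p)) 0 y.

(* sinh_{p,q} : [0, pi_{r,q}/2) -> [0,oo), inverse of G_{p,q}. *)
Definition sinh_pq (p q x : R) : R :=
  epsilon (inhabits 0) (fun y => 0 <= y /\ G_pq p q y = x).

Definition r_of (p q : R) : R := p * q / (p * q + p - q).

Definition is_derive_dom (f : R -> R) (b : Rbar) (x l : R) : Prop :=
  filterlim (fun y => (f y - f x) / (y - x))
    (within (fun y => 0 <= y /\ Rbar_lt y b /\ y <> x) (locally x))
    (locally l).

Definition is_cos_pq (p q x l : R) : Prop :=
  is_derive_dom (sin_pq p q) (Rbar_mult (/ 2) (pi_pq p q)) x l.

Definition is_cosh_pq (p q x l : R) : Prop :=
  is_derive_dom (sinh_pq p q) (Rbar_mult (/ 2) (pi_pq (r_of p q) q)) x l.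

(* The map [s |-> s (1 - s^Q)^(-1/Q)] carries the integrand of [F_{r,Q}] to that of
   [G_{P,Q}] when [1/r = 1 + 1/Q - 1/P], so [sinh_{P,Q}] is this map composed with
   [sin_{r,Q}]. For [p = 2q/(2+q)] the duplication map
   [D s = 2^(2/q) s (1 + s^(q/2))^(-2/q)] is a bijection of [[0,1)] with
   [F_{p,q/2} o D = 2^(2/q) F_{p,q}]; this rescales the half periods and gives
   [sin_{p,q/2}(2^(2/q) x) = D (sin_{p,q} x)]. Since [r = p] both for [(P,Q) = (2,q)]
   and for [(p, q/2)], the [sinh] formula follows as well. By the inverse function
   rule [cos_{P,Q} = (1 - sin^Q)^(1/P)] and [cosh_{P,Q} = (1 + sinh^Q)^(1/P)], and the
   remaining formulas are identities in [w = sin_{p,q}^(q/2) x], the key one being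
   [cosh_{2,q} + sinh_{2,q}^(q/2) = ((1 + w)/(1 - w))^(1/2)]. Both substitutions are
   verified by differentiation: primitives with equal derivatives that agree at [0]
   coincide. *)

From Stdlib Require Import Reals Lra ClassicalEpsilon Classical.
From Coquelicot Require Import Coquelicot.
Open Scope R_scope.

Lemma pw_exp_ln x a : 0 < x -> pw x a = exp (a * ln x).
Proof. intros hx; unfold pw; destruct (Rlt_dec 0 x); [reflexivity | lra]. Qed.

Lemma pw_nonpos_l x a : x <= 0 -> pw x a = 0.
Proof. intros hx; unfold pw; destruct (Rlt_dec 0 x); [lra | reflexivity]. Qed.

Lemma pw_gt0 x a : 0 < x -> 0 < pw x a.
Proof. intros hx; rewrite pw_exp_ln by exact hx; apply exp_pos. Qed.

Lemma pw_ge0 x a : 0 <= pw x a.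
Proof.
  destruct (Rlt_dec 0 x) as [hx | hx].
  - now left; apply pw_gt0.
  - rewrite pw_nonpos_l; lra.
Qed.

Lemma pw_0l a : pw 0 a = 0.
Proof. apply pw_nonpos_l; lra. Qed.

Lemma pw_1l a : pw 1 a = 1.
Proof. rewrite pw_exp_ln, ln_1, Rmult_0_r by lra; apply exp_0. Qed.

Lemma pw_1 x : 0 <= x -> pw x 1 = x.
Proof.
  intros [hx | <-]; [| apply pw_0l].
  rewrite pw_exp_ln, Rmult_1_l by exact hx; now apply exp_ln.
Qed.

(* [pw] vanishes on nonpositive bases and [/ 0 = 0], so most exponent laws below hold
   without any sign hypothesis. *)
Lemma pw_plus x a b : pw x (a + b) = pw x a * pw x b.
Proof.
  destruct (Rlt_dec 0 x) as [hx | hx].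
  - rewrite !pw_exp_ln, <- exp_plus by exact hx; f_equal; ring.
  - rewrite !pw_nonpos_l by lra; ring.
Qed.

Lemma pw_opp x a : pw x (- a) = / pw x a.
Proof.
  destruct (Rlt_dec 0 x) as [hx | hx].
  - rewrite !pw_exp_ln, <- exp_Ropp by exact hx; f_equal; ring.
  - rewrite !pw_nonpos_l, Rinv_0 by lra; reflexivity.
Qed.

Lemma pw_Rinv x a : pw (/ x) a = pw x (- a).
Proof.
  destruct (Rlt_dec 0 x) as [hx | hx].
  - rewrite !pw_exp_ln, ln_Rinv by (auto; now apply Rinv_0_lt_compat); f_equal; ring.
  - assert (/ x <= 0).
    { destruct (Req_dec x 0) as [-> | hx0]; [rewrite Rinv_0; lra |].
      left; apply Rinv_lt_0_compat; lra. }
    rewrite !pw_nonpos_l by lra; reflexivity.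
Qed.

Lemma pw_mult x y a : 0 <= x -> 0 <= y -> pw (x * y) a = pw x a * pw y a.
Proof.
  intros [hx | <-] [hy | <-]; try (rewrite ?Rmult_0_l, ?Rmult_0_r, !pw_0l; ring).
  rewrite !pw_exp_ln, ln_mult, <- exp_plus by (auto; nra); f_equal; ring.
Qed.

Lemma pw_div x y a : 0 <= x -> 0 <= y -> pw (x / y) a = pw x a / pw y a.
Proof.
  intros hx hy; unfold Rdiv.
  destruct hy as [hy | <-].
  - rewrite pw_mult, pw_Rinv, pw_opp by (auto; left; now apply Rinv_0_lt_compat); reflexivity.
  - rewrite Rinv_0, Rmult_0_r, pw_0l, Rinv_0; ring.
Qed.

Lemma pw_pw x a b : pw (pw x a) b = pw x (a * b).
Proof.
  destruct (Rlt_dec 0 x) as [hx | hx].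
  - rewrite (pw_exp_ln (pw x a)), !pw_exp_ln, ln_exp by (auto; now apply pw_gt0); f_equal; ring.
  - rewrite (pw_nonpos_l x a), (pw_nonpos_l x (a * b)) by lra; apply pw_0l.
Qed.

Lemma pw_pw_inv x a : 0 <= x -> a <> 0 -> pw (pw x a) (/ a) = x.
Proof. intros hx ha; rewrite pw_pw, Rinv_r by exact ha; now apply pw_1. Qed.

Lemma pw_lt_compat x y a : 0 < a -> 0 <= x < y -> pw x a < pw y a.
Proof.
  intros ha [[hx | <-] hxy]; [| rewrite pw_0l; apply pw_gt0; lra].
  rewrite !pw_exp_ln by lra; apply exp_increasing.
  apply Rmult_lt_compat_l; [exact ha | now apply ln_increasing].
Qed.

Lemma pw_lt1 x a : 0 < a -> 0 <= x < 1 -> pw x a < 1.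
Proof. intros ha hx; rewrite <- (pw_1l a); now apply pw_lt_compat. Qed.

Lemma is_derive_pw x a : 0 < x -> is_derive (fun t => pw t a) x (a * pw x (a - 1)).
Proof.
  intros hx.
  apply is_derive_ext_loc with (fun t => exp (a * ln t)).
  { apply locally_interval with 0 p_infty; simpl; auto.
    intros t ht _; symmetry; now apply pw_exp_ln. }
  unfold Rminus; rewrite pw_plus, pw_opp, pw_1, pw_exp_ln by lra.
  auto_derive; [lra | field; lra].
Qed.

Lemma continuous_of_is_derive (f : R -> R) x l : is_derive f x l -> continuous f x.
Proof. intros hf; apply (ex_derive_continuous (K := R_AbsRing) (V := R_NormedModule)); now exists l. Qed.

Lemma continuous_pw x a : 0 < x \/ 0 < a -> continuous (fun t => pw t a) x.
Proof.
  intros hxa; destruct (Rtotal_order x 0) as [hx | [-> | hx]].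
  - unfold continuous; rewrite pw_nonpos_l by lra.
    apply filterlim_ext_loc with (fun _ => 0); [| apply filterlim_const].
    apply locally_interval with m_infty 0; simpl; auto.
    intros t _ ht; symmetry; apply pw_nonpos_l; lra.
  - destruct hxa as [hx | ha]; [lra |].
    unfold continuous; rewrite pw_0l; apply filterlim_locally; intros eps.
    exists (mkposreal _ (pw_gt0 _ (/ a) (cond_pos eps))); intros t ht.
    change (Rabs (t - 0) < pw eps (/ a)) in ht; change (Rabs (pw t a - 0) < eps).
    rewrite Rminus_0_r, Rabs_pos_eq by apply pw_ge0; rewrite Rminus_0_r in ht.
    destruct (Rlt_dec 0 t) as [ht0 | ht0]; [| rewrite pw_nonpos_l by lra; apply cond_pos].
    rewrite Rabs_pos_eq in ht by lra.
    rewrite <- (pw_pw_inv eps (/ a)), Rinv_inv by (pose proof (cond_pos eps); auto with real).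
    apply pw_lt_compat; lra.
  - eapply continuous_of_is_derive; now apply is_derive_pw.
Qed.

Definition F_integrand (P Q t : R) : R := pw (1 - pw t Q) (- / P).
Definition G_integrand (P Q t : R) : R := pw (1 + pw t Q) (- / P).

Lemma one_minus_pw_pos t Q : 0 < Q -> t < 1 -> 0 < 1 - pw t Q.
Proof.
  intros hQ ht; destruct (Rle_dec t 0) as [ht0 | ht0].
  - rewrite pw_nonpos_l by exact ht0; lra.
  - pose proof (pw_lt1 t Q hQ ltac:(lra)); lra.
Qed.

Lemma continuous_F_integrand P Q t : 0 < Q -> t < 1 -> continuous (F_integrand P Q) t.
Proof.
  intros hQ ht; apply (continuous_comp (fun t => 1 - pw t Q) (fun y => pw y (- / P))).
  - apply (continuous_minus (fun _ => 1) (fun t => pw t Q)); [apply continuous_const |].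
    apply continuous_pw; now right.
  - apply continuous_pw; left; now apply one_minus_pw_pos.
Qed.

Lemma continuous_G_integrand P Q t : 0 < Q -> continuous (G_integrand P Q) t.
Proof.
  intros hQ; apply (continuous_comp (fun t => 1 + pw t Q) (fun y => pw y (- / P))).
  - apply (continuous_plus (fun _ => 1) (fun t => pw t Q)); [apply continuous_const |].
    apply continuous_pw; now right.
  - apply continuous_pw; left; pose proof (pw_ge0 t Q); lra.
Qed.

Lemma is_derive_F_pq P Q z : 0 < Q -> z < 1 -> is_derive (F_pq P Q) z (F_integrand P Q z).
Proof.
  intros hQ hz; apply (is_derive_RInt (F_integrand P Q) (F_pq P Q) 0 z).
  - apply locally_interval with m_infty 1; simpl; auto.
    intros b _ hb; apply (RInt_correct (F_integrand P Q)), ex_RInt_continuous.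
    intros t ht; apply continuous_F_integrand; [exact hQ |].
    assert (Rmax 0 b < 1) by (apply Rmax_lub_lt; lra); lra.
  - now apply continuous_F_integrand.
Qed.

Lemma is_derive_G_pq P Q z : 0 < Q -> is_derive (G_pq P Q) z (G_integrand P Q z).
Proof.
  intros hQ; apply (is_derive_RInt (G_integrand P Q) (G_pq P Q) 0 z).
  - apply filter_forall; intros b.
    apply (RInt_correct (G_integrand P Q)), ex_RInt_continuous.
    intros t _; now apply continuous_G_integrand.
  - now apply continuous_G_integrand.
Qed.

Lemma F_pq_0 P Q : F_pq P Q 0 = 0.
Proof. apply (RInt_point (V := R_CompleteNormedModule)). Qed.

Lemma G_pq_0 P Q : G_pq P Q 0 = 0.
Proof. apply (RInt_point (V := R_CompleteNormedModule)). Qed.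

Lemma lt_of_is_derive_pos (f df : R -> R) a b :
  (forall x, a <= x <= b -> is_derive f x (df x) /\ 0 < df x) -> a < b -> f a < f b.
Proof.
  intros hf hab; destruct (MVT_gen f a b df) as [c [hc E]];
    rewrite ?Rmin_left, ?Rmax_right in * by lra.
  - intros x hx; apply hf; lra.
  - intros x hx; apply continuity_pt_filterlim.
    apply (continuous_of_is_derive _ _ (df x)), hf; lra.
  - destruct (hf c hc); nra.
Qed.

Lemma F_pq_lt P Q a b : 0 < Q -> a < b -> b < 1 -> F_pq P Q a < F_pq P Q b.
Proof.
  intros hQ hab hb; apply (lt_of_is_derive_pos _ (F_integrand P Q)); [| exact hab].
  intros x hx; split; [apply is_derive_F_pq; lra |].
  apply pw_gt0, one_minus_pw_pos; lra.
Qed.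

Lemma G_pq_lt P Q a b : 0 < Q -> a < b -> G_pq P Q a < G_pq P Q b.
Proof.
  intros hQ hab; apply (lt_of_is_derive_pos _ (G_integrand P Q)); [| exact hab].
  intros x hx; split; [now apply is_derive_G_pq |].
  apply pw_gt0; pose proof (pw_ge0 x Q); lra.
Qed.

Lemma eq_of_is_derive_eq (f g df : R -> R) b :
  (forall x, 0 < x < b -> is_derive f x (df x)) ->
  (forall x, 0 < x < b -> is_derive g x (df x)) ->
  (forall x, 0 <= x < b -> continuous f x) ->
  (forall x, 0 <= x < b -> continuous g x) ->
  f 0 = g 0 -> forall x, 0 <= x < b -> f x = g x.
Proof.
  intros hf hg cf cg h0 x [[hx | <-] hxb]; [| exact h0].
  destruct (MVT_gen (fun t => f t - g t) 0 x (fun _ => 0)) as [c [_ E]];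
    rewrite ?Rmin_left, ?Rmax_right in * by lra.
  - intros t ht; replace 0 with (df t - df t) by ring.
    apply (is_derive_minus f g); [apply hf | apply hg]; lra.
  - intros t ht; apply continuity_pt_filterlim.
    apply (continuous_minus f g); [apply cf | apply cg]; lra.
  - lra.
Qed.

Lemma is_derive_slope (f : R -> R) z l :
  is_derive f z l ->
  filterlim (fun t => (f t - f z) / (t - z)) (within (fun t => t <> z) (locally z)) (locally l).
Proof.
  intros hf; apply is_derive_Reals in hf.
  apply filterlim_locally; intros eps; destruct (hf eps (cond_pos eps)) as [d hd].
  exists d; intros t ht htz; change R in t; change (Rabs (t - z) < d) in ht.
  specialize (hd (t - z) ltac:(lra) ht); now replace (z + (t - z)) with t in hd by ring.
Qed.

Section InverseFunction.

Variables (phi g : R -> R) (A B : Rbar).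
Hypothesis g_spec : forall y, 0 <= y -> Rbar_lt y B -> 0 <= g y /\ Rbar_lt (g y) A /\ phi (g y) = y.
Hypothesis phi_lt : forall a b, 0 <= a -> a < b -> Rbar_lt b A -> phi a < phi b.

Lemma phi_le a b : 0 <= a -> a <= b -> Rbar_lt b A -> phi a <= phi b.
Proof. intros ha [hab | <-] hb; [left; now apply phi_lt | lra]. Qed.

Lemma continuous_inverse y0 eps :
  0 <= y0 -> Rbar_lt y0 B -> 0 < eps ->
  exists d, 0 < d /\ forall y, 0 <= y -> Rbar_lt y B -> Rabs (y - y0) < d -> Rabs (g y - g y0) < eps.
Proof.
  intros hy0 hy0B heps; destruct (g_spec y0 hy0 hy0B) as [hz0 [hz0A hphi0]].
  set (z0 := g y0) in *.
  assert (he : exists e, 0 < e <= eps /\ Rbar_lt (z0 + e) A).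
  { destruct A as [a | |]; simpl in hz0A |- *; [| now exists eps; lra | easy].
    exists (Rmin eps ((a - z0) / 2)); pose proof (Rmin_l eps ((a - z0) / 2));
      pose proof (Rmin_r eps ((a - z0) / 2)); pose proof (Rmin_pos eps ((a - z0) / 2)); lra. }
  destruct he as [e [[he heps'] heA]].
  (* If [g y] left [(z0 - e, z0 + e)], monotonicity of [phi] would push [y = phi (g y)]
     beyond [phi (z0 + e)] or below [phi (z0 - e)]. *)
  assert (hup : exists d, 0 < d /\ forall y, 0 <= y -> Rbar_lt y B -> y < y0 + d -> g y < z0 + e).
  { exists (phi (z0 + e) - y0); split.
    - rewrite <- hphi0; enough (phi z0 < phi (z0 + e)) by lra; apply phi_lt; auto; lra.
    - intros y hy hyB hyd; destruct (g_spec y hy hyB) as [hz [hzA hphi]].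
      destruct (Rlt_le_dec (g y) (z0 + e)) as [| hge]; [easy |].
      pose proof (phi_le (z0 + e) (g y) ltac:(lra) hge hzA); lra. }
  assert (hlow : exists d, 0 < d /\ forall y, 0 <= y -> Rbar_lt y B -> y0 - d < y -> z0 - e < g y).
  { destruct (Rle_lt_dec 0 (z0 - e)) as [hpos | hneg].
    - exists (y0 - phi (z0 - e)); split.
      + rewrite <- hphi0; enough (phi (z0 - e) < phi z0) by lra; apply phi_lt; auto; lra.
      + intros y hy hyB hyd; destruct (g_spec y hy hyB) as [hz [hzA hphi]].
        destruct (Rlt_le_dec (z0 - e) (g y)) as [| hle]; [easy |].
        assert (hA : Rbar_lt (z0 - e) A) by (destruct A; simpl in *; auto; lra).
        pose proof (phi_le (g y) (z0 - e) hz hle hA); lra.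
    - exists 1; split; [lra |]; intros y hy hyB _; pose proof (proj1 (g_spec y hy hyB)); lra. }
  destruct hup as [d1 [hd1 hup]]; destruct hlow as [d2 [hd2 hlow]].
  exists (Rmin d1 d2); split; [now apply Rmin_pos |].
  intros y hy hyB hyd; pose proof (Rmin_l d1 d2); pose proof (Rmin_r d1 d2).
  apply Rabs_def2 in hyd; apply Rabs_def1.
  - enough (g y < z0 + e) by lra; apply hup; auto; lra.
  - enough (z0 - e < g y) by lra; apply hlow; auto; lra.
Qed.

Lemma is_derive_dom_inverse y0 l :
  0 <= y0 -> Rbar_lt y0 B -> is_derive phi (g y0) l -> l <> 0 ->
  is_derive_dom g B y0 (/ l).
Proof.
  intros hy0 hy0B hphi hl; destruct (g_spec y0 hy0 hy0B) as [_ [_ hphi0]].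
  set (D := within (fun y => 0 <= y /\ Rbar_lt y B /\ y <> y0) (locally y0)).
  assert (hgD : filterlim g D (within (fun z => z <> g y0) (locally (g y0)))).
  { intros P [eps hP]; destruct (continuous_inverse y0 eps hy0 hy0B (cond_pos eps)) as [d [hd hg]].
    exists (mkposreal d hd); intros y hy [hy1 [hyB hyy0]]; apply hP.
    - exact (hg y hy1 hyB hy).
    - intros E; apply hyy0; rewrite <- hphi0, <- E; symmetry; apply (g_spec y hy1 hyB). }
  unfold is_derive_dom; fold D.
  apply filterlim_ext_loc with (fun y => / ((phi (g y) - phi (g y0)) / (g y - g y0))).
  - exists (mkposreal 1 Rlt_0_1); intros y _ [hy1 [hyB hyy0]].
    destruct (g_spec y hy1 hyB) as [_ [_ hphiy]].
    assert (g y - g y0 <> 0) by (intros E; apply hyy0; rewrite <- hphiy, <- hphi0; f_equal; lra).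
    rewrite hphiy, hphi0; field; split; lra.
  - apply (filterlim_comp _ _ _ (fun y => (phi (g y) - phi (g y0)) / (g y - g y0)) Rinv D
      (locally l)); [| now apply continuous_Rinv].
    apply (filterlim_comp _ _ _ g (fun z => (phi z - phi (g y0)) / (z - g y0)) D
      (within (fun z => z <> g y0) (locally (g y0)))); [exact hgD |].
    now apply is_derive_slope.
Qed.

End InverseFunction.

Lemma Rbar_mult_posreal (c : R) (hc : 0 < c) x : Rbar_mult c x = Rbar_mult_pos x (mkposreal c hc).
Proof.
  destruct x as [x | |]; [simpl; f_equal; ring | |];
    unfold Rbar_mult, Rbar_mult'; destruct (Rle_dec 0 c) as [h | h]; try lra;
    destruct (Rle_lt_or_eq_dec 0 c h); (reflexivity || lra).
Qed.

Lemma Rbar_mult_assoc_pos (a b : R) x :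
  0 < a -> 0 < b -> Rbar_mult a (Rbar_mult b x) = Rbar_mult (a * b) x.
Proof.
  intros ha hb; rewrite (Rbar_mult_posreal a ha), (Rbar_mult_posreal b hb).
  rewrite (Rbar_mult_posreal (a * b) (Rmult_lt_0_compat a b ha hb)).
  destruct x; simpl; auto; f_equal; ring.
Qed.

Lemma Rbar_mult_1_l x : Rbar_mult 1 x = x.
Proof. rewrite (Rbar_mult_posreal 1 Rlt_0_1); destruct x; simpl; auto; f_equal; ring. Qed.

Lemma Lub_Rbar_scal (E : R -> Prop) (c : posreal) :
  Lub_Rbar (fun z => E (z / c)) = Rbar_mult_pos (Lub_Rbar E) c.
Proof.
  pose proof (cond_pos c) as hc.
  apply is_lub_Rbar_unique; destruct (Lub_Rbar_correct E) as [hub hleast]; split.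
  - intros z hz; pose proof (hub _ hz) as h; apply (Rbar_mult_pos_le _ _ c) in h; simpl in h.
    now replace (z / c * c) with z in h by (field; lra).
  - intros b hb; set (ic := mkposreal (/ c) (Rinv_0_lt_compat _ hc)).
    assert (hE : is_ub_Rbar E (Rbar_mult_pos b ic)).
    { intros x hx; apply (Rbar_mult_pos_le _ _ c).
      replace (Rbar_mult_pos (Rbar_mult_pos b ic) c) with b
        by (destruct b; simpl; auto; f_equal; field; lra).
      apply hb; simpl; now replace (x * c / c) with x by (field; lra). }
    pose proof (hleast _ hE) as h; apply (Rbar_mult_pos_le _ _ c) in h.
    now replace (Rbar_mult_pos (Rbar_mult_pos b ic) c) with b in h
      by (destruct b; simpl; auto; f_equal; field; lra).
Qed.

Definition F_image (P Q z : R) : Prop := exists y, 0 <= y < 1 /\ z = F_pq P Q y.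

Lemma half_pi_pq P Q : Rbar_mult (/ 2) (pi_pq P Q) = Lub_Rbar (F_image P Q).
Proof.
  unfold pi_pq; rewrite Rbar_mult_assoc_pos, Rinv_l, Rbar_mult_1_l by lra; reflexivity.
Qed.

Lemma F_pq_onto P Q x :
  0 < Q -> 0 <= x -> Rbar_lt x (Rbar_mult (/ 2) (pi_pq P Q)) ->
  exists y, 0 <= y < 1 /\ F_pq P Q y = x.
Proof.
  intros hQ hx hxL; rewrite half_pi_pq in hxL.
  destruct (classic (exists z, F_image P Q z /\ x < z)) as [[z [[y0 [hy0 ->]] hz]] | hnone].
  - destruct hx as [hx | <-]; [| exists 0; split; [lra | apply F_pq_0]].
    assert (hy0p : 0 < y0).
    { destruct (proj1 hy0) as [h | <-]; [exact h | rewrite F_pq_0 in hz; lra]. }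
    destruct (Ranalysis5.IVT_interv (fun t => F_pq P Q t - x) 0 y0) as [y [hy E]];
      [| lra | rewrite F_pq_0; lra | lra | exists y; split; lra].
    intros t ht; apply continuity_pt_filterlim.
    apply (continuous_minus (F_pq P Q) (fun _ => x)); [| apply continuous_const].
    eapply continuous_of_is_derive; apply is_derive_F_pq; lra.
  - exfalso; apply (Rbar_lt_not_le _ _ hxL), (proj2 (Lub_Rbar_correct _)).
    intros z hz; simpl; apply Rnot_lt_le; intros hxz; apply hnone; now exists z.
Qed.

Lemma sin_pq_spec P Q x :
  0 < Q -> 0 <= x -> Rbar_lt x (Rbar_mult (/ 2) (pi_pq P Q)) ->
  0 <= sin_pq P Q x < 1 /\ F_pq P Q (sin_pq P Q x) = x.
Proof.
  intros hQ hx hxL; destruct (F_pq_onto P Q x hQ hx hxL) as [y hy].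
  exact (epsilon_spec (inhabits 0) (fun y => 0 <= y < 1 /\ F_pq P Q y = x) (ex_intro _ y hy)).
Qed.

Lemma sin_pq_F_pq P Q y : 0 < Q -> 0 <= y < 1 -> sin_pq P Q (F_pq P Q y) = y.
Proof.
  intros hQ hy.
  destruct (epsilon_spec (inhabits 0) (fun z => 0 <= z < 1 /\ F_pq P Q z = F_pq P Q y)
    (ex_intro _ y (conj hy eq_refl))) as [hz E]; fold (sin_pq P Q (F_pq P Q y)) in hz, E.
  destruct (Rtotal_order (sin_pq P Q (F_pq P Q y)) y) as [hlt | [heq | hgt]]; [| exact heq |].
  - pose proof (F_pq_lt P Q _ _ hQ hlt (proj2 hy)); lra.
  - pose proof (F_pq_lt P Q _ _ hQ hgt (proj2 hz)); lra.
Qed.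

Lemma sinh_pq_G_pq P Q y : 0 < Q -> 0 <= y -> sinh_pq P Q (G_pq P Q y) = y.
Proof.
  intros hQ hy.
  destruct (epsilon_spec (inhabits 0) (fun z => 0 <= z /\ G_pq P Q z = G_pq P Q y)
    (ex_intro _ y (conj hy eq_refl))) as [hz E]; fold (sinh_pq P Q (G_pq P Q y)) in hz, E.
  destruct (Rtotal_order (sinh_pq P Q (G_pq P Q y)) y) as [hlt | [heq | hgt]]; [| exact heq |].
  - pose proof (G_pq_lt P Q _ _ hQ hlt); lra.
  - pose proof (G_pq_lt P Q _ _ hQ hgt); lra.
Qed.

Lemma is_cos_pq_sin_pq P Q x :
  0 < Q -> 0 <= x -> Rbar_lt x (Rbar_mult (/ 2) (pi_pq P Q)) ->
  is_cos_pq P Q x (pw (1 - pw (sin_pq P Q x) Q) (/ P)).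
Proof.
  intros hQ hx hxL; destruct (sin_pq_spec P Q x hQ hx hxL) as [hs _].
  replace (pw (1 - pw (sin_pq P Q x) Q) (/ P)) with (/ F_integrand P Q (sin_pq P Q x))
    by (unfold F_integrand; now rewrite pw_opp, Rinv_inv).
  apply (is_derive_dom_inverse (F_pq P Q) (sin_pq P Q) 1); auto.
  - intros y hy hyB; destruct (sin_pq_spec P Q y hQ hy hyB) as [[h0 h1] hF]; simpl; auto.
  - intros a b _ hab hb; simpl in hb; now apply F_pq_lt.
  - apply is_derive_F_pq; lra.
  - apply Rgt_not_eq, pw_gt0, one_minus_pw_pos; lra.
Qed.

(* With [k = -1] this turns [sin_pq] into [sinh_pq]; with [k = 1] and [a = q/2] it is
   the duplication map up to the factor [2^(2/q)]. *)
Definition mobius_pw (k a s : R) : R := s / pw (1 + k * pw s a) (/ a).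

Lemma mobius_pw_mult k a s : mobius_pw k a s = s * pw (1 + k * pw s a) (- / a).
Proof. unfold mobius_pw, Rdiv; now rewrite pw_opp. Qed.

Lemma mobius_pw_0 k a : mobius_pw k a 0 = 0.
Proof. rewrite mobius_pw_mult; ring. Qed.

Lemma mobius_pw_ge0 k a s : 0 <= s -> 0 <= mobius_pw k a s.
Proof. intros hs; rewrite mobius_pw_mult; apply Rmult_le_pos; [exact hs | apply pw_ge0]. Qed.

Lemma pw_mobius_pw k a s :
  0 < a -> 0 <= s -> 0 < 1 + k * pw s a ->
  pw (mobius_pw k a s) a = pw s a / (1 + k * pw s a).
Proof.
  intros ha hs hpos; rewrite mobius_pw_mult, pw_mult, pw_pw by (auto; apply pw_ge0).
  replace (- / a * a) with (- (1)) by (field; lra).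
  now rewrite pw_opp, pw_1 by lra.
Qed.

Lemma is_derive_mobius_pw k a s :
  0 < a -> 0 < s -> 0 < 1 + k * pw s a ->
  is_derive (mobius_pw k a) s (pw (1 + k * pw s a) (- / a - 1)).
Proof.
  intros ha hs hpos.
  assert (hin : is_derive (fun t => 1 + k * pw t a) s (0 + k * (a * pw s (a - 1)))).
  { apply (is_derive_plus (fun _ => 1) (fun t => k * pw t a));
      [apply (is_derive_const (K := R_AbsRing) (V := R_NormedModule))
      | apply is_derive_scal, is_derive_pw, hs]. }
  assert (hprod := is_derive_mult (fun t => t) (fun t => pw (1 + k * pw t a) (- / a)) s _ _
    (is_derive_id s) (is_derive_comp (fun y => pw y (- / a)) _ s _ _ (is_derive_pw _ _ hpos) hin)
    Rmult_comm).
  apply (is_derive_ext _ _ s _ (fun t => eq_sym (mobius_pw_mult k a t))).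
  set (H := 1 + k * pw s a) in *.
  replace (pw H (- / a - 1))
    with (1 * pw H (- / a) + s * ((0 + k * (a * pw s (a - 1))) * (- / a * pw H (- / a - 1))));
    [exact hprod |].
  assert (eH : pw H (- / a) = pw H (- / a - 1) * pw H 1) by (rewrite <- pw_plus; f_equal; ring).
  assert (es : s * pw s (a - 1) = pw s a)
    by (rewrite <- (pw_1 s) at 1 by lra; rewrite <- pw_plus; f_equal; ring).
  rewrite eH, (pw_1 H) by lra; set (P := pw H (- / a - 1)); unfold H.
  rewrite <- es; field; lra.
Qed.

Lemma continuous_mobius_pw k a s :
  0 < a -> 0 <= s -> 0 < 1 + k * pw s a -> continuous (mobius_pw k a) s.
Proof.
  intros ha hs hpos.
  apply (continuous_ext (fun t => t * pw (1 + k * pw t a) (- / a)));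
    [intros t; symmetry; apply mobius_pw_mult |].
  apply (continuous_mult (fun t => t) (fun t => pw (1 + k * pw t a) (- / a)));
    [apply continuous_id |].
  apply (continuous_comp (fun t => 1 + k * pw t a) (fun y => pw y (- / a)));
    [| apply continuous_pw; now left].
  apply (continuous_plus (fun _ => 1) (fun t => k * pw t a)); [apply continuous_const |].
  apply (continuous_mult (fun _ => k) (fun t => pw t a)); [apply continuous_const |].
  apply continuous_pw; now right.
Qed.

Lemma r_of_pos_denominator P Q : 0 < Q -> Q / (Q + 1) < P -> 0 < P * Q + P - Q.
Proof.
  intros hQ hP; apply Rlt_div_l in hP; [| lra].
  replace (P * Q + P - Q) with (P * (Q + 1) - Q) by ring; lra.
Qed.

Lemma G_integrand_mobius_pw P Q s :
  0 < Q -> Q / (Q + 1) < P -> 0 <= s < 1 ->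
  pw (1 + -1 * pw s Q) (- / Q - 1) * G_integrand P Q (mobius_pw (-1) Q s)
  = F_integrand (r_of P Q) Q s.
Proof.
  intros hQ hP hs; pose proof (r_of_pos_denominator P Q hQ hP) as hr.
  assert (hP0 : 0 < P) by (apply Rlt_trans with (Q / (Q + 1)); [apply Rdiv_lt_0_compat |]; lra).
  assert (hX : 0 < 1 + -1 * pw s Q) by (pose proof (one_minus_pw_pos s Q hQ (proj2 hs)); lra).
  unfold G_integrand, F_integrand; rewrite pw_mobius_pw by (auto; lra).
  replace (1 + pw s Q / (1 + -1 * pw s Q)) with (/ (1 + -1 * pw s Q)) by (field; lra).
  replace (1 - pw s Q) with (1 + -1 * pw s Q) by ring.
  rewrite pw_Rinv, <- pw_plus; f_equal; unfold r_of; field; repeat split; lra.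
Qed.

Lemma G_pq_mobius_pw P Q s :
  0 < Q -> Q / (Q + 1) < P -> 0 <= s < 1 ->
  G_pq P Q (mobius_pw (-1) Q s) = F_pq (r_of P Q) Q s.
Proof.
  intros hQ hP; revert s.
  assert (hX : forall t, 0 <= t < 1 -> 0 < 1 + -1 * pw t Q)
    by (intros t ht; pose proof (one_minus_pw_pos t Q hQ (proj2 ht)); lra).
  apply (eq_of_is_derive_eq _ _ (F_integrand (r_of P Q) Q) 1).
  - intros x hx; rewrite <- G_integrand_mobius_pw by (auto; lra).
    apply (is_derive_comp (G_pq P Q) (mobius_pw (-1) Q)); [now apply is_derive_G_pq |].
    apply is_derive_mobius_pw; [lra | lra | apply hX; lra].
  - intros x hx; apply is_derive_F_pq; lra.
  - intros x hx; apply (continuous_comp (mobius_pw (-1) Q) (G_pq P Q)).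
    + apply continuous_mobius_pw; [lra | lra | now apply hX].
    + eapply continuous_of_is_derive; now apply is_derive_G_pq.
  - intros x hx; eapply continuous_of_is_derive; apply is_derive_F_pq; lra.
  - now rewrite mobius_pw_0, G_pq_0, F_pq_0.
Qed.

Lemma sinh_pq_sin_pq P Q x :
  0 < Q -> Q / (Q + 1) < P -> 0 <= x -> Rbar_lt x (Rbar_mult (/ 2) (pi_pq (r_of P Q) Q)) ->
  sinh_pq P Q x = mobius_pw (-1) Q (sin_pq (r_of P Q) Q x).
Proof.
  intros hQ hP hx hxL; destruct (sin_pq_spec (r_of P Q) Q x hQ hx hxL) as [hs hF].
  rewrite <- hF at 1; rewrite <- G_pq_mobius_pw by auto.
  apply sinh_pq_G_pq; [exact hQ | apply mobius_pw_ge0; lra].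
Qed.

Lemma sinh_pq_spec P Q x :
  0 < Q -> Q / (Q + 1) < P -> 0 <= x -> Rbar_lt x (Rbar_mult (/ 2) (pi_pq (r_of P Q) Q)) ->
  0 <= sinh_pq P Q x /\ G_pq P Q (sinh_pq P Q x) = x.
Proof.
  intros hQ hP hx hxL; destruct (sin_pq_spec (r_of P Q) Q x hQ hx hxL) as [hs hF].
  rewrite sinh_pq_sin_pq, G_pq_mobius_pw by auto.
  split; [apply mobius_pw_ge0; lra | exact hF].
Qed.

Lemma is_cosh_pq_sinh_pq P Q x :
  0 < Q -> Q / (Q + 1) < P -> 0 <= x -> Rbar_lt x (Rbar_mult (/ 2) (pi_pq (r_of P Q) Q)) ->
  is_cosh_pq P Q x (pw (1 + pw (sinh_pq P Q x) Q) (/ P)).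
Proof.
  intros hQ hP hx hxL.
  replace (pw (1 + pw (sinh_pq P Q x) Q) (/ P)) with (/ G_integrand P Q (sinh_pq P Q x))
    by (unfold G_integrand; now rewrite pw_opp, Rinv_inv).
  apply (is_derive_dom_inverse (G_pq P Q) (sinh_pq P Q) p_infty); auto.
  - intros y hy hyB; destruct (sinh_pq_spec P Q y hQ hP hy hyB); simpl; auto.
  - intros a b _ hab _; now apply G_pq_lt.
  - now apply is_derive_G_pq.
  - apply Rgt_not_eq, pw_gt0; pose proof (pw_ge0 (sinh_pq P Q x) Q); lra.
Qed.

Definition duplication (q s : R) : R := pw 2 (2 / q) * s / pw (1 + pw s (q / 2)) (2 / q).

Section Duplication.

Variable q : R.
Hypothesis hq : 0 < q.
Local Notation p := (2 * q / (2 + q)).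

Lemma duplication_mobius_pw s : duplication q s = pw 2 (2 / q) * mobius_pw 1 (q / 2) s.
Proof.
  unfold duplication, mobius_pw; replace (/ (q / 2)) with (2 / q) by (field; lra).
  rewrite Rmult_1_l; unfold Rdiv; ring.
Qed.

Lemma pw_duplication s :
  0 <= s -> pw (duplication q s) (q / 2) = 2 * pw s (q / 2) / (1 + pw s (q / 2)).
Proof.
  intros hs; pose proof (pw_ge0 s (q / 2)).
  rewrite duplication_mobius_pw, pw_mult, pw_mobius_pw, pw_pw by (auto; try apply pw_ge0;
    try apply mobius_pw_ge0; lra).
  replace (2 / q * (q / 2)) with 1 by (field; lra); rewrite pw_1 by lra; field; lra.
Qed.

Lemma duplication_range s : 0 <= s < 1 -> 0 <= duplication q s < 1.
Proof.
  intros hs; assert (hD : 0 <= duplication q s).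
  { rewrite duplication_mobius_pw; apply Rmult_le_pos; [apply pw_ge0 | apply mobius_pw_ge0; lra]. }
  split; [exact hD |].
  rewrite <- (pw_pw_inv (duplication q s) (q / 2)), pw_duplication by lra.
  pose proof (pw_ge0 s (q / 2)); pose proof (pw_lt1 s (q / 2) ltac:(lra) hs).
  apply pw_lt1; [apply Rinv_0_lt_compat; lra |].
  split; [apply Rdiv_le_0_compat; lra | apply Rlt_div_l; lra].
Qed.

Lemma duplication_onto y : 0 <= y < 1 -> exists s, 0 <= s < 1 /\ duplication q s = y.
Proof.
  intros hy; set (u := pw y (q / 2)).
  assert (hu : 0 <= u < 1) by (split; [apply pw_ge0 | apply pw_lt1; lra]).
  assert (hw : 0 <= u / (2 - u) < 1) by (split; [apply Rdiv_le_0_compat | apply Rlt_div_l]; lra).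
  set (s := pw (u / (2 - u)) (2 / q)).
  assert (hs : 0 <= s < 1) by (split; [apply pw_ge0 | apply pw_lt1; [apply Rdiv_lt_0_compat |]; lra]).
  exists s; split; [exact hs |].
  rewrite <- (pw_pw_inv (duplication q s) (q / 2)), pw_duplication by
    (try apply duplication_range; lra).
  unfold s; rewrite pw_pw; replace (2 / q * (q / 2)) with 1 by (field; lra); rewrite pw_1 by lra.
  replace (2 * (u / (2 - u)) / (1 + u / (2 - u))) with u by (field; lra).
  unfold u; rewrite pw_pw_inv; lra.
Qed.

Lemma is_derive_duplication s :
  0 < s -> is_derive (duplication q) s (pw 2 (2 / q) * pw (1 + pw s (q / 2)) (- (2 / q) - 1)).
Proof.
  intros hs.
  apply (is_derive_ext _ _ s _ (fun t => eq_sym (duplication_mobius_pw t))).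
  replace (- (2 / q)) with (- / (q / 2)) by (field; lra).
  rewrite <- (Rmult_1_l (pw s (q / 2))); apply is_derive_scal, is_derive_mobius_pw; [lra | exact hs |].
  pose proof (pw_ge0 s (q / 2)); lra.
Qed.

Lemma continuous_duplication s : 0 <= s -> continuous (duplication q) s.
Proof.
  intros hs; apply (continuous_ext (fun t => pw 2 (2 / q) * mobius_pw 1 (q / 2) t));
    [intros t; symmetry; apply duplication_mobius_pw |].
  apply (continuous_mult (fun _ => pw 2 (2 / q)) (mobius_pw 1 (q / 2))); [apply continuous_const |].
  apply continuous_mobius_pw; [lra | exact hs | pose proof (pw_ge0 s (q / 2)); lra].
Qed.

Lemma F_integrand_duplication s :
  0 <= s < 1 ->
  pw 2 (2 / q) * pw (1 + pw s (q / 2)) (- (2 / q) - 1) * F_integrand p (q / 2) (duplication q s)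
  = pw 2 (2 / q) * F_integrand p q s.
Proof.
  intros hs; unfold F_integrand; rewrite pw_duplication by lra.
  replace (pw s q) with (pw s (q / 2) * pw s (q / 2)) by (rewrite <- pw_plus; f_equal; field).
  set (w := pw s (q / 2)); assert (hw : 0 <= w < 1) by (split; [apply pw_ge0 | apply pw_lt1; lra]).
  replace (1 - 2 * w / (1 + w)) with ((1 - w) * / (1 + w)) by (field; lra).
  replace (1 - w * w) with ((1 - w) * (1 + w)) by ring.
  rewrite !pw_mult, pw_Rinv by (try left; try apply Rinv_0_lt_compat; lra).
  replace (pw (1 + w) (- / p)) with (pw (1 + w) (- (2 / q) - 1) * pw (1 + w) (- - / p))
    by (rewrite <- pw_plus; f_equal; field; lra).
  ring.
Qed.

Lemma F_pq_duplication s :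
  0 <= s < 1 -> F_pq p (q / 2) (duplication q s) = pw 2 (2 / q) * F_pq p q s.
Proof.
  revert s; apply (eq_of_is_derive_eq _ _ (fun s => pw 2 (2 / q) * F_integrand p q s) 1).
  - intros x hx; rewrite <- F_integrand_duplication by lra.
    apply (is_derive_comp (F_pq p (q / 2)) (duplication q)); [| now apply is_derive_duplication].
    apply is_derive_F_pq; [lra | apply duplication_range; lra].
  - intros x hx; apply is_derive_scal, is_derive_F_pq; lra.
  - intros x hx; apply (continuous_comp (duplication q) (F_pq p (q / 2)));
      [apply continuous_duplication; lra |].
    eapply continuous_of_is_derive; apply is_derive_F_pq; [lra | apply duplication_range; lra].
  - intros x hx; apply (continuous_mult (fun _ => pw 2 (2 / q)) (F_pq p q));
      [apply continuous_const |].
    eapply continuous_of_is_derive; apply is_derive_F_pq; lra.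
  - rewrite duplication_mobius_pw, mobius_pw_0, Rmult_0_r, !F_pq_0; ring.
Qed.

Lemma half_pi_duplication :
  Rbar_mult (/ 2) (pi_pq p (q / 2)) = Rbar_mult (pw 2 (2 / q)) (Rbar_mult (/ 2) (pi_pq p q)).
Proof.
  pose proof (pw_gt0 2 (2 / q) Rlt_0_2) as hc.
  rewrite !half_pi_pq, (Rbar_mult_posreal _ hc), <- Lub_Rbar_scal.
  apply Lub_Rbar_eqset; intros z; split.
  - intros [y [hy ->]]; destruct (duplication_onto y hy) as [s [hs <-]].
    exists s; split; [exact hs |]; simpl; rewrite F_pq_duplication by exact hs; field; lra.
  - intros [s [hs E]]; exists (duplication q s); split; [now apply duplication_range |].
    rewrite F_pq_duplication by exact hs; simpl in E |- *; rewrite <- E; field; lra.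
Qed.

Lemma pi_pq_duplication :
  Rbar_mult (/ pw 2 (2 / q + 1)) (pi_pq p (q / 2)) = Rbar_mult (/ 2) (pi_pq p q).
Proof.
  pose proof (pw_gt0 2 (2 / q) Rlt_0_2) as hc.
  assert (hc2 : 0 < / (pw 2 (2 / q) * 2)) by (apply Rinv_0_lt_compat; nra).
  replace (pi_pq p (q / 2)) with (Rbar_mult 2 (Rbar_mult (/ 2) (pi_pq p (q / 2))))
    by (rewrite Rbar_mult_assoc_pos, Rinv_r, Rbar_mult_1_l by lra; reflexivity).
  rewrite pw_plus, pw_1, half_pi_duplication, !Rbar_mult_assoc_pos by nra.
  do 2 f_equal; field; lra.
Qed.

Lemma duplication_lt_half_pi (x : R) :
  Rbar_lt x (Rbar_mult (/ 2) (pi_pq p q)) ->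
  Rbar_lt (pw 2 (2 / q) * x) (Rbar_mult (/ 2) (pi_pq p (q / 2))).
Proof.
  pose proof (pw_gt0 2 (2 / q) Rlt_0_2) as hc; intros hx.
  rewrite half_pi_duplication, (Rbar_mult_posreal _ hc).
  apply (Rbar_mult_pos_lt _ _ (mkposreal _ hc)) in hx; simpl in hx.
  replace (pw 2 (2 / q) * x) with (x * pw 2 (2 / q)) by ring; exact hx.
Qed.

Lemma sin_pq_duplication x :
  0 <= x -> Rbar_lt x (Rbar_mult (/ 2) (pi_pq p q)) ->
  sin_pq p (q / 2) (pw 2 (2 / q) * x) = duplication q (sin_pq p q x).
Proof.
  intros hx hxL; destruct (sin_pq_spec p q x hq hx hxL) as [hs hF].
  rewrite <- hF at 1; rewrite <- F_pq_duplication by exact hs.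
  apply sin_pq_F_pq; [lra | now apply duplication_range].
Qed.

Lemma r_of_2 : r_of 2 q = p.
Proof. unfold r_of; field; lra. Qed.

Lemma r_of_duplication : r_of p (q / 2) = p.
Proof.
  unfold r_of; replace (p * (q / 2) + p - q / 2) with (q / 2) by (field; lra); field; lra.
Qed.

Lemma sinh_pq_2_sin_pq x :
  0 <= x -> Rbar_lt x (Rbar_mult (/ 2) (pi_pq p q)) ->
  sinh_pq 2 q x = mobius_pw (-1) q (sin_pq p q x).
Proof.
  intros hx hxL; rewrite <- r_of_2 in *; apply sinh_pq_sin_pq; auto.
  apply Rlt_div_l; lra.
Qed.

Lemma sinh_pq_duplication x :
  0 <= x -> Rbar_lt x (Rbar_mult (/ 2) (pi_pq p q)) ->
  sinh_pq p (q / 2) (pw 2 (2 / q) * x) = mobius_pw (-1) (q / 2) (duplication q (sin_pq p q x)).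
Proof.
  intros hx hxL; pose proof (pw_gt0 2 (2 / q) Rlt_0_2).
  rewrite <- sin_pq_duplication by auto.
  rewrite sinh_pq_sin_pq, r_of_duplication; [reflexivity | lra | | nra |].
  - apply Rlt_div_l; [lra |].
    replace (2 * q / (2 + q) * (q / 2 + 1)) with q by (field; lra); lra.
  - rewrite r_of_duplication; now apply duplication_lt_half_pi.
Qed.

Lemma cos_duplication s :
  0 <= s < 1 ->
  pw (1 - pw (duplication q s) (q / 2)) (/ p)
  = pw ((1 - pw s (q / 2)) / (1 + pw s (q / 2))) (1 / q + 1 / 2).
Proof.
  intros hs; rewrite pw_duplication by lra; pose proof (pw_ge0 s (q / 2)).
  replace (1 - 2 * pw s (q / 2) / (1 + pw s (q / 2)))
    with ((1 - pw s (q / 2)) / (1 + pw s (q / 2))) by (field; lra).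
  f_equal; field; lra.
Qed.

Lemma cosh_plus_sinh_mobius_pw s :
  0 <= s < 1 ->
  let sh := mobius_pw (-1) q s in
  pw (1 + pw sh q) (/ 2) + pw sh (q / 2)
  = pw ((1 + pw s (q / 2)) / (1 - pw s (q / 2))) (/ 2).
Proof.
  intros hs sh.
  assert (hw : 0 <= pw s (q / 2) < 1) by (split; [apply pw_ge0 | apply pw_lt1; lra]).
  assert (hsq : pw s q = pw s (q / 2) * pw s (q / 2)) by (rewrite <- pw_plus; f_equal; field).
  replace (pw sh (q / 2)) with (pw (pw sh q) (/ 2)) by (rewrite pw_pw; reflexivity).
  unfold sh; rewrite pw_mobius_pw, hsq by (try rewrite hsq; nra).
  set (w := pw s (q / 2)) in *.
  replace (1 + w * w / (1 + -1 * (w * w))) with (/ ((1 - w) * (1 + w))) by (field; nra).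
  replace (w * w / (1 + -1 * (w * w))) with ((w * w) * / ((1 - w) * (1 + w))) by (field; nra).
  rewrite pw_div, !pw_mult, !pw_Rinv, !pw_mult, !pw_opp
    by (try (left; apply Rinv_0_lt_compat); nra).
  assert (hsqrt : forall x, 0 <= x -> pw x (/ 2) * pw x (/ 2) = x)
    by (intros x hx; rewrite <- pw_plus; replace (/ 2 + / 2) with 1 by field; now apply pw_1).
  rewrite hsqrt by lra.
  assert (hA : pw (1 + w) (/ 2) * pw (1 + w) (/ 2) = 1 + w) by (apply hsqrt; lra).
  assert (pw (1 - w) (/ 2) > 0) by (apply pw_gt0; lra).
  assert (pw (1 + w) (/ 2) > 0) by (apply pw_gt0; lra).
  set (A := pw (1 + w) (/ 2)) in *; set (B := pw (1 - w) (/ 2)) in *.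
  replace (/ B * / A + w * (/ B * / A)) with ((1 + w) / (B * A)) by (field; lra).
  rewrite <- hA; field; lra.
Qed.


Lemma mobius_pw_duplication s :
  0 <= s < 1 ->
  mobius_pw (-1) (q / 2) (duplication q s)
  = duplication q s * pw ((1 + pw s (q / 2)) / (1 - pw s (q / 2))) (2 / q).
Proof.
  intros hs; assert (hw : 0 <= pw s (q / 2) < 1) by (split; [apply pw_ge0 | apply pw_lt1; lra]).
  rewrite mobius_pw_mult, pw_duplication by lra.
  replace (1 + -1 * (2 * pw s (q / 2) / (1 + pw s (q / 2))))
    with (/ ((1 + pw s (q / 2)) / (1 - pw s (q / 2)))) by (field; lra).
  rewrite pw_Rinv; do 2 f_equal; field; lra.
Qed.

Lemma sinh_duplication s :
  0 <= s < 1 ->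
  let sh := mobius_pw (-1) q s in
  mobius_pw (-1) (q / 2) (duplication q s)
  = pw 2 (2 / q) * sh * pw (pw (1 + pw sh q) (/ 2) + pw sh (q / 2)) (2 / q).
Proof.
  intros hs sh; subst sh.
  rewrite cosh_plus_sinh_mobius_pw, pw_pw, mobius_pw_duplication by exact hs.
  unfold duplication; rewrite mobius_pw_mult.
  replace (pw s q) with (pw s (q / 2) * pw s (q / 2)) by (rewrite <- pw_plus; f_equal; field).
  set (w := pw s (q / 2)); assert (hw : 0 <= w < 1) by (split; [apply pw_ge0 | apply pw_lt1; lra]).
  set (c := pw 2 (2 / q)).
  replace (1 + -1 * (w * w)) with ((1 - w) * (1 + w)) by ring.
  replace (/ 2 * (2 / q)) with (/ q) by (field; lra).
  replace (2 / q) with (/ q + / q) by (field; lra).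
  rewrite !pw_div, !pw_mult, !pw_plus, !pw_opp by lra.
  assert (pw (1 - w) (/ q) > 0) by (apply pw_gt0; lra).
  assert (pw (1 + w) (/ q) > 0) by (apply pw_gt0; lra).
  field; lra.
Qed.

Lemma cosh_duplication s :
  0 <= s < 1 ->
  let sh := mobius_pw (-1) q s in
  pw (1 + pw (mobius_pw (-1) (q / 2) (duplication q s)) (q / 2)) (/ p)
  = pw (pw (1 + pw sh q) (/ 2) + pw sh (q / 2)) (2 / q + 1).
Proof.
  intros hs sh; subst sh; rewrite cosh_plus_sinh_mobius_pw, pw_pw by exact hs.
  assert (hw : 0 <= pw s (q / 2) < 1) by (split; [apply pw_ge0 | apply pw_lt1; lra]).
  rewrite pw_mobius_pw, pw_duplication; [| lra | lra | now apply duplication_range |].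
  - replace (1 + 2 * pw s (q / 2) / (1 + pw s (q / 2))
        / (1 + -1 * (2 * pw s (q / 2) / (1 + pw s (q / 2)))))
      with ((1 + pw s (q / 2)) / (1 - pw s (q / 2))) by (field; lra).
    f_equal; field; lra.
  - rewrite pw_duplication by lra.
    enough (2 * pw s (q / 2) / (1 + pw s (q / 2)) < 1) by lra.
    apply Rlt_div_l; lra.
Qed.

End Duplication.

Theorem theorem4p1 (q : R) (hq : 0 < q) :
  let p := 2 * q / (2 + q) in
  Rbar_mult (/ pw 2 (2 / q + 1)) (pi_pq p (q / 2))
    = Rbar_mult (/ 2) (pi_pq p q) /\
  (forall x : R, 0 <= x -> Rbar_lt x (Rbar_mult (/ 2) (pi_pq p q)) ->
    let s := sin_pq p q x in
    let sh := sinh_pq 2 q x in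
    sin_pq p (q / 2) (pw 2 (2 / q) * x)
      = pw 2 (2 / q) * s / pw (1 + pw s (q / 2)) (2 / q) /\
    is_cos_pq p (q / 2) (pw 2 (2 / q) * x)
      (pw ((1 - pw s (q / 2)) / (1 + pw s (q / 2))) (1 / q + 1 / 2)) /\
    (exists ch : R, is_cosh_pq 2 q x ch /\
      sinh_pq p (q / 2) (pw 2 (2 / q) * x)
        = pw 2 (2 / q) * sh * pw (ch + pw sh (q / 2)) (2 / q) /\
      is_cosh_pq p (q / 2) (pw 2 (2 / q) * x)
        (pw (ch + pw sh (q / 2)) (2 / q + 1)))).
Proof.
  intros p; subst p; split; [now apply pi_pq_duplication |].
  intros x hx hxL s sh.
  destruct (sin_pq_spec _ q x hq hx hxL) as [hs _].
  assert (hcx : 0 <= pw 2 (2 / q) * x) by (apply Rmult_le_pos; [apply pw_ge0 | exact hx]).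
  assert (hsh : sh = mobius_pw (-1) q s) by now apply sinh_pq_2_sin_pq.
  split; [now apply sin_pq_duplication |].
  split.
  { rewrite <- cos_duplication by assumption; unfold s; rewrite <- sin_pq_duplication by auto.
    apply is_cos_pq_sin_pq; [lra | exact hcx | now apply duplication_lt_half_pi]. }
  exists (pw (1 + pw sh q) (/ 2)); split; [| split].
  - apply is_cosh_pq_sinh_pq; [exact hq | apply Rlt_div_l; lra | exact hx |].
    now rewrite r_of_2.
  - rewrite sinh_pq_duplication, hsh by auto; now apply sinh_duplication.
  - rewrite hsh, <- cosh_duplication by assumption; unfold s.
    rewrite <- sinh_pq_duplication by auto.
    apply is_cosh_pq_sinh_pq; [lra | | exact hcx |].
    + apply Rlt_div_l; [lra |].
      replace (2 * q / (2 + q) * (q / 2 + 1)) with q by (field; lra); lra.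
    + rewrite r_of_duplication by exact hq; now apply duplication_lt_half_pi.
Qed.
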